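(* Let $d\ge 2$ and $L\in\mathbb{N}$, and let $$P(\mathbf{x})=\prod_{j=1}^d\left[\sin^{2L}(\pi x_j/2)\sum_{k_j=0}^{L-1}\binom{2L-1}{k_j}\sin^{2(L-1-k_j)}(\pi x_j/2)\cos^{2k_j}(\pi x_j/2)\right],\qquad\mathbf{x}\in\mathbb{R}^d.$$ Then $P\chi_{[0,2]^d}$ satisfies the partition of unity condition $$\sum_{\mathbf{n}\in\mathbb{Z}^d}P(\mathbf{x}+\mathbf{n})\chi_{[0,2]^d}(\mathbf{x}+\mathbf{n})=1\quad\text{for all }\mathbf{x}\in\mathbb{R}^d,$$ and $P\chi_{[0,2]^d}\in C^{2L-1}(\mathbb{R}^d)$.
   Context: $\chi_{[0,2]^d}$ is the indicator function of $[0,2]^d$. $C^{m}(\mathbb{R}^d)$ denotes functions with continuous partial derivatives of all total orders at most $m$. *)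

From HB Require Import structures.
From mathcomp Require Import all_boot all_order all_algebra.
From mathcomp Require Import all_classical all_reals all_analysis.
Set Implicit Arguments. Unset Strict Implicit. Unset Printing Implicit Defensive.
Import Order.TTheory GRing.Theory Num.Theory.
Import numFieldNormedType.Exports.
Local Open Scope ring_scope.

Definition Pfun (R : realType) (d L : nat) (x : 'rV[R]_d) : R :=
  \prod_(j < d)
    ((sin (pi * x ord0 j / 2)) ^+ (2 * L) *
     \sum_(k < L) ('C(2 * L - 1, k))%:R *
        (sin (pi * x ord0 j / 2)) ^+ (2 * (L - 1 - k)) *
        (cos (pi * x ord0 j / 2)) ^+ (2 * k)).

Definition chi02 (R : realType) (d : nat) (x : 'rV[R]_d) : R :=
  if [forall j : 'I_d, (0 <= x ord0 j <= 2)] then 1 else 0.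

Definition Pchi (R : realType) (d L : nat) (x : 'rV[R]_d) : R :=
  Pfun L x * chi02 x.

Definition basis_vec (R : realType) (d : nat) (j : 'I_d) : 'rV[R]_d :=
  delta_mx ord0 j.

Fixpoint Cm (R : realType) (d : nat) (m : nat) (f : 'rV[R]_d -> R) : Prop :=
  match m with
  | 0 => continuous f
  | m'.+1 => continuous f /\
      forall j : 'I_d,
        (forall x, derivable f x (basis_vec R j)) /\
        Cm m' ('D_(basis_vec R j) f)
  end.

From HB Require Import structures.
From mathcomp Require Import all_boot all_order all_algebra.
From mathcomp Require Import all_classical all_reals all_analysis.
From mathcomp Require Import ring lra zify.
Import Order.TTheory GRing.Theory Num.Theory.
Import numFieldNormedType.Exports.
Local Open Scope classical_set_scope.
Local Open Scope ring_scope.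
Set Implicit Arguments. Unset Strict Implicit. Unset Printing Implicit Defensive.

(* With s = sin^2(pi t/2) and c = cos^2(pi t/2), the one-variable factor of P is
   F(t) = s^L sum_(k<L) C(2L-1,k) s^(L-1-k) c^k.  Since the shift t -> t+1 swaps s
   and c, F(t) + F(t+1) is the binomial expansion of (s + c)^(2L-1) = 1, split into
   its lower and upper halves; as F vanishes at 0 and 2, the integer translates of
   the cut-off F chi_[0,2] sum to 1 on R, and the tensor product of d copies sums
   to 1 on R^d.  Smoothness: F is a sum of monomials sin^a cos^b with a >= 2L, and
   differentiating such a sum lowers the minimal exponent of sin by at most one, so
   F and its first 2L-1 derivatives vanish at 0 and 2; hence cutting F off to [0,2]
   commutes with 2L-1 differentiations, and the tensor product inherits C^(2L-1). *)

Lemma exprDn_halves (R : comPzRingType) (s c : R) (L : nat) : (1 <= L)%N ->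
  s ^+ L * \sum_(k < L) ('C(2 * L - 1, k))%:R * s ^+ (L - 1 - k) * c ^+ k +
  c ^+ L * \sum_(k < L) ('C(2 * L - 1, k))%:R * c ^+ (L - 1 - k) * s ^+ k
  = (s + c) ^+ (2 * L - 1).
Proof.
move=> L_gt0; rewrite exprDn.
rewrite (_ : (2 * L - 1).+1 = L + L); last by lia.
rewrite big_split_ord /= [X in _ = _ + X](reindex_inj rev_ord_inj) /=.
rewrite !mulr_sumr; congr (_ + _); apply: eq_bigr => i _; have ltiL := ltn_ord i.
  rewrite (_ : 2 * L - 1 - i = L + (L - 1 - i))%N; last by lia.
  by rewrite exprD -mulr_natr; ring.
rewrite (_ : (2 * L - 1 - (L + (L - i.+1))) = i)%N; last by lia.
rewrite (_ : (L + (L - i.+1)) = (2 * L - 1) - i)%N; last by lia.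
rewrite bin_sub; last by lia.
rewrite (_ : (2 * L - 1 - i) = L + (L - 1 - i))%N; last by lia.
by rewrite exprD -mulr_natr; ring.
Qed.

Section Cutoff.
Variable R : realType.
Implicit Types (phi : R -> R) (t : R).

Definition cut02 phi t : R := if (0 <= t) && (t <= 2) then phi t else 0.

Lemma cut02_ge0 phi t : (forall u, 0 <= phi u) -> 0 <= cut02 phi t.
Proof. by move=> phi_ge0; rewrite /cut02; case: ifP. Qed.

Lemma near_cut02 phi t : t != 0 -> t != 2 ->
  \forall y \near t, (if (0 <= t) && (t <= 2) then phi y else 0) = cut02 phi y.
Proof.
move=> t0 t2; rewrite /cut02.
have [t_lt0|t_ge0] := ltP t 0.
  near=> y; have y0 : y < 0 by near: y; exact: lt_nbhsl.
  by rewrite [0 <= y]leNgt y0.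
have [t_gt2|t_le2] := ltP 2 t.
  near=> y; have y2 : 2 < y by near: y; exact: lt_nbhsr.
  by rewrite [y <= 2]leNgt y2 /= andbF.
have t_gt0 : 0 < t by rewrite lt_neqAle eq_sym t0.
have t_lt2 : t < 2 by rewrite lt_neqAle t2.
near=> y.
have -> : 0 <= y by apply/ltW; near: y; exact: lt_nbhsr.
by have -> : y <= 2 by apply/ltW; near: y; exact: lt_nbhsl.
Unshelve. all: by end_near. Qed.

Lemma continuous_cut02 phi : continuous phi -> phi 0 = 0 -> phi 2 = 0 ->
  continuous (cut02 phi).
Proof.
move=> cphi phi0 phi2 t.
have cut02_edge a : phi a = 0 -> (0 <= a <= 2) -> cut02 phi x @[x --> a] --> cut02 phi a.
  move=> phia a02; apply/cvgrPdist_lt => e e0.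
  move/cvgrPdist_lt: (cphi a) => /(_ e e0); apply: filterS => y.
  by rewrite /cut02 a02 phia !sub0r !normrN; case: ifP => // _ _; rewrite normr0.
have [->|t0] := eqVneq t 0; first by apply: cut02_edge; rewrite ?lexx ?ler0n.
have [->|t2] := eqVneq t 2; first by apply: cut02_edge; rewrite ?lexx ?ler0n.
apply: cvg_trans (near_eq_cvg (near_cut02 phi t0 t2)) _.
rewrite [cut02 phi t]/cut02; case: ifP => _; [exact: cphi | exact: cvg_cst].
Qed.

Lemma is_derive_cut02_root phi t : derivable phi t 1 -> phi t = 0 ->
  derive1 phi t = 0 -> cut02 phi t = 0 -> is_derive t 1 (cut02 phi) 0.
Proof.
move=> dphi phit dphit cut0.
have : 'D_1 phi t = 0 by rewrite -derive1E.
rewrite /derive => Dphi; move: dphi; rewrite /derivable Dphi => quot_cvg.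
have cut_quot_cvg : (fun h => h^-1 *: ((cut02 phi \o shift t) (h *: 1) - cut02 phi t))
    @ 0^' --> (0 : R).
  apply/cvgr0Pnorm_lt => e e0; move/cvgr0Pnorm_lt: quot_cvg => /(_ e e0).
  apply: filterS => h /=; rewrite cut0 phit /cut02.
  by case: ifP => // _ _; rewrite subr0 scaler0 normr0.
apply: DeriveDef; first exact: cvgP cut_quot_cvg.
exact: cvg_lim cut_quot_cvg.
Qed.

Lemma is_derive_cut02 phi : (forall t, derivable phi t 1) ->
  phi 0 = 0 -> phi 2 = 0 -> derive1 phi 0 = 0 -> derive1 phi 2 = 0 ->
  forall t, is_derive t 1 (cut02 phi) (cut02 (derive1 phi) t).
Proof.
move=> dphi phi0 phi2 dphi0 dphi2 t.
have [->|t0] := eqVneq t 0.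
  rewrite {2}/cut02 lexx ler0n dphi0.
  by apply: is_derive_cut02_root; rewrite // /cut02 lexx ler0n.
have [->|t2] := eqVneq t 2.
  rewrite {2}/cut02 lexx ler0n dphi2.
  by apply: is_derive_cut02_root; rewrite // /cut02 lexx ler0n.
apply: (near_eq_is_derive (near_cut02 phi t0 t2)).
rewrite /cut02; case: ifP => _; last exact: is_derive_cst.
by rewrite derive1E; exact: derivableP.
Qed.

End Cutoff.

Section SinDivisible.
Variable R : realType.

Definition sinpi2 (t : R) := sin (pi * t / 2).
Definition cospi2 (t : R) := cos (pi * t / 2).

Lemma is_derive_pi2 (t : R) : is_derive t 1 (fun u : R => pi * u / 2) (pi / 2).
Proof.
rewrite (_ : (fun u : R => pi * u / 2) = (pi / 2) \*: (@id R)); last first.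
  by apply/funext => u /=; rewrite mulrAC.
by apply: (is_derive_eq (is_deriveZ _ (is_derive_id t 1))); rewrite [_%:A]mulr1.
Qed.

Lemma is_derive_sinpi2 (t : R) : is_derive t 1 sinpi2 (cospi2 t * (pi / 2)).
Proof. exact: is_derive1_comp (is_derive_sin _) (is_derive_pi2 t). Qed.

Lemma is_derive_cospi2 (t : R) : is_derive t 1 cospi2 (- sinpi2 t * (pi / 2)).
Proof. exact: is_derive1_comp (is_derive_cos _) (is_derive_pi2 t). Qed.

Definition trig_monomial (c : R) (a b : nat) (t : R) :=
  c * sinpi2 t ^+ a * cospi2 t ^+ b.

Lemma is_derive_trig_monomial c a b (t : R) : is_derive t 1 (trig_monomial c a b)
  (trig_monomial (c * a%:R * (pi / 2)) a.-1 b.+1 t +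
   trig_monomial (- (c * b%:R * (pi / 2))) a.+1 b.-1 t).
Proof.
have := is_deriveM (is_deriveM (is_derive_cst c t 1) (is_deriveX a (is_derive_sinpi2 t)))
  (is_deriveX b (is_derive_cospi2 t)).
rewrite (_ : (cst c * sinpi2 ^+ a) * cospi2 ^+ b = trig_monomial c a b); last first.
  by apply/funext => u; rewrite /trig_monomial /= !exprfctE.
move/is_derive_eq; apply; rewrite /trig_monomial /= !exprfctE /GRing.scale /=.
change ((cst c * _) t) with (c * sinpi2 t ^+ a); move: (sinpi2 t) (cospi2 t) => S C.
by case: a => [|a]; case: b => [|b]; rewrite /= ?exprS; ring.
Qed.

Inductive sin_divisible (k : nat) : (R -> R) -> Prop :=
| sin_divisible_monomial c a b : (k <= a)%N -> sin_divisible k (trig_monomial c a b)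
| sin_divisible_add f g : sin_divisible k f -> sin_divisible k g ->
    sin_divisible k (f \+ g).

Lemma sin_divisible_ext k f g : sin_divisible k f -> f =1 g -> sin_divisible k g.
Proof. by move=> kf /funext <-. Qed.

Lemma sin_divisible0 k : sin_divisible k (fun=> 0).
Proof.
apply: (sin_divisible_ext (sin_divisible_monomial 0 0 (leqnn k))) => t.
by rewrite /trig_monomial !mul0r.
Qed.

Lemma sin_divisible_sum k n (F : nat -> R -> R) :
  (forall i, (i < n)%N -> sin_divisible k (F i)) ->
  sin_divisible k (fun t => \sum_(i < n) F i t).
Proof.
elim: n => [|n IHn] kF.
  by apply: (sin_divisible_ext (sin_divisible0 k)) => t; rewrite big_ord0.
apply: (sin_divisible_ext (sin_divisible_add (IHn (fun i lt_in => kF i (ltnW lt_in)))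
  (kF n (ltnSn n)))) => t.
by rewrite big_ord_recr.
Qed.

Lemma sin_divisible_derive k f : sin_divisible k f ->
  (forall t, derivable f t 1) /\ sin_divisible k.-1 (derive1 f).
Proof.
elim=> {f} [c a b le_ka|f g _ [df kf'] _ [dg kg']].
  split=> [t|]; first by case: (is_derive_trig_monomial c a b t).
  apply: (sin_divisible_ext (sin_divisible_add
    (@sin_divisible_monomial k.-1 (c * a%:R * (pi / 2)) a.-1 b.+1 _)
    (@sin_divisible_monomial k.-1 (- (c * b%:R * (pi / 2))) a.+1 b.-1 _))).
  - by move: le_ka; case: k; case: a => //= *; lia.
  - by move: le_ka; case: k; case: a => //= *; lia.
  by move=> t; rewrite derive1E; case: (is_derive_trig_monomial c a b t) => _ ->.
split=> [t|]; first exact: derivableD (df t) (dg t).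
apply: (sin_divisible_ext (sin_divisible_add kf' kg')) => t.
by rewrite /= !derive1E; exact: esym (deriveD (df t) (dg t)).
Qed.

Lemma sin_divisible_continuous k f : sin_divisible k f -> continuous f.
Proof.
move=> /sin_divisible_derive [df _] t.
by apply: differentiable_continuous; rewrite -derivable1_diffP.
Qed.

Lemma sin_divisible_root k f : sin_divisible k.+1 f -> f 0 = 0 /\ f 2 = 0.
Proof.
elim=> {f} [c a b lt_ka|f g _ [f0 f2] _ [g0 g2]]; last by rewrite /= f0 f2 g0 g2 addr0.
rewrite /trig_monomial /sinpi2 mulr0 mul0r sin0 mulfK ?pnatr_eq0 // sinpi.
by case: a lt_ka => // a _; rewrite !expr0n /= !mulr0 !mul0r.
Qed.

Fixpoint Cm1 (m : nat) (f : R -> R) : Prop :=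
  match m with
  | 0 => continuous f
  | m'.+1 => continuous f /\ (forall t, derivable f t 1) /\ Cm1 m' (derive1 f)
  end.

Lemma Cm1_pred m f : Cm1 m.+1 f -> Cm1 m f.
Proof.
elim: m f => [|m IHm] f /= [cf [df Cf']] //.
by split=> //; split=> //; exact: IHm.
Qed.

Lemma Cm1_cut02 m k f : sin_divisible k f -> (m < k)%N -> Cm1 m (cut02 f).
Proof.
elim: m k f => [|m IHm] [|k] f // kf lt_mk.
  have [f0 f2] := sin_divisible_root kf.
  exact: continuous_cut02 (sin_divisible_continuous kf) f0 f2.
have [f0 f2] := sin_divisible_root kf.
have [df kf'] := sin_divisible_derive kf.
case: k kf kf' lt_mk => // k kf kf' lt_mk.
have [f'0 f'2] := sin_divisible_root kf'.
have dcut := is_derive_cut02 df f0 f2 f'0 f'2.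
split; first exact: continuous_cut02 (sin_divisible_continuous kf) f0 f2.
split=> [t|]; first by case: (dcut t).
rewrite (_ : derive1 (cut02 f) = cut02 (derive1 f)); last first.
  by apply/funext => t; rewrite derive1E; case: (dcut t) => _ ->.
exact: IHm kf' _.
Qed.

End SinDivisible.

Section Profile.
Variables (R : realType) (L : nat).

Definition Pfactor (t : R) : R :=
  sin (pi * t / 2) ^+ (2 * L) *
  \sum_(k < L) ('C(2 * L - 1, k))%:R *
    sin (pi * t / 2) ^+ (2 * (L - 1 - k)) * cos (pi * t / 2) ^+ (2 * k).

Lemma Pfactor_sin_divisible : sin_divisible (2 * L) Pfactor.
Proof.
apply: (sin_divisible_ext (@sin_divisible_sum _ (2 * L) L
  (fun k => trig_monomial ('C(2 * L - 1, k))%:R (2 * L + 2 * (L - 1 - k)) (2 * k)) _)).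
  by move=> k _; apply: sin_divisible_monomial; exact: leq_addr.
move=> t; rewrite /Pfactor mulr_sumr; apply: eq_bigr => k _.
by rewrite /trig_monomial /sinpi2 /cospi2 exprD; ring.
Qed.

Lemma Pfactor_ge0 t : 0 <= Pfactor t.
Proof.
have even_ge0 (u : R) n : 0 <= u ^+ (2 * n) by rewrite exprM exprn_ge0 ?sqr_ge0.
apply: mulr_ge0 => //; apply: sumr_ge0 => k _.
by rewrite !mulr_ge0 ?ler0n.
Qed.

Lemma Pfactor_root : (1 <= L)%N -> Pfactor 0 = 0 /\ Pfactor 2 = 0.
Proof.
move=> L_gt0; apply: (@sin_divisible_root _ (2 * L - 1)).
by rewrite (_ : (2 * L - 1).+1 = 2 * L); [exact: Pfactor_sin_divisible | lia].
Qed.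

Lemma Pfactor_addD1 t : (1 <= L)%N -> Pfactor t + Pfactor (t + 1) = 1.
Proof.
move=> L_gt0; rewrite /Pfactor mulrDr mulr1 mulrDl sinDpihalf cosDpihalf.
set u := pi * t / 2.
have sin2Dcos2 : sin u ^+ 2 + cos u ^+ 2 = 1 by rewrite sin2cos2 subrK.
transitivity ((sin u ^+ 2 + cos u ^+ 2) ^+ (2 * L - 1)); last by rewrite sin2Dcos2 expr1n.
rewrite -exprDn_halves // !exprM.
by congr (_ + _); congr (_ * _); apply: eq_bigr => k _; rewrite !exprM ?sqrrN.
Qed.

End Profile.

Section TensorProduct.
Variables (R : realType) (d : nat).

Definition tensor_prod (h : 'I_d -> R -> R) (x : 'rV[R]_d) : R :=
  \prod_i h i (x ord0 i).

Lemma continuous_prod (T : topologicalType) n (G : 'I_n -> T -> R) :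
  (forall j, continuous (G j)) -> continuous (fun x => \prod_(j < n) G j x).
Proof.
elim: n G => [|n IHn] G cG x.
  by under eq_fun do rewrite big_ord0; exact: cst_continuous.
under eq_fun do rewrite big_ord_recr.
by apply: continuousM; [exact: (IHn _ (fun j => cG _) x) | exact: cG].
Qed.

Lemma continuous_tensor_prod h : (forall j, continuous (h j)) ->
  continuous (tensor_prod h).
Proof.
move=> ch; apply: continuous_prod => j x.
by apply: continuous_comp; [exact: coord_continuous | exact: ch].
Qed.

Lemma is_derive_tensor_prod h (j : 'I_d) (x : 'rV[R]_d) :
  derivable (h j) (x ord0 j) 1 ->
  is_derive x (basis_vec R j) (tensor_prod h)
    (tensor_prod (fun i => if i == j then derive1 (h j) else h i) x).
Proof.
move=> dh.
set C := \prod_(i | i != j) h i (x ord0 i).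
have tensor_prod_line t :
    tensor_prod h (t *: basis_vec R j + x) = h j (t + x ord0 j) * C.
  rewrite /tensor_prod (bigD1 j) //=; congr (_ * _); first by rewrite !mxE !eqxx mulr1.
  by apply: eq_bigr => i ij; rewrite !mxE eqxx (negbTE ij) mulr0 add0r.
have tensor_prodE : tensor_prod h x = h j (x ord0 j) * C by rewrite /tensor_prod (bigD1 j).
have quotE : (fun t : R => t^-1 *: ((tensor_prod h \o shift x) (t *: basis_vec R j)
    - tensor_prod h x)) =
  (fun t : R => C * (t^-1 *: ((h j \o shift (x ord0 j)) (t *: 1) - h j (x ord0 j)))).
  by apply/funext => t /=; rewrite tensor_prod_line tensor_prodE /GRing.scale /= mulr1; ring.
have Cq_cvg := @cvgMl_tmp _ _ _ _ _ C _ dh; rewrite -quotE in Cq_cvg.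
apply: DeriveDef; first exact: cvgP (Cq_cvg _).
rewrite /derive (cvg_lim _ (Cq_cvg _)) //.
rewrite /tensor_prod (bigD1 j) //= eqxx derive1E mulrC; congr (_ * _).
by apply: eq_bigr => i ij; rewrite (negbTE ij).
Qed.

Lemma Cm_tensor_prod m h : (forall j, Cm1 m (h j)) -> Cm m (tensor_prod h).
Proof.
elim: m h => [|m IHm] h Ch; first exact: continuous_tensor_prod.
split=> [|j]; first by apply: continuous_tensor_prod => j; case: (Ch j).
have [_ [dh Chj']] := Ch j.
have Dh x := @is_derive_tensor_prod h j x (dh (x ord0 j)).
split=> [x|]; first by case: (Dh x).
rewrite (_ : 'D_(basis_vec R j) _ = tensor_prod (fun i => if i == j then derive1 (h j) else h i)).
  by apply: IHm => i; case: eqP => _; [exact: Chj' | exact: Cm1_pred].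
by apply/funext => x; case: (Dh x).
Qed.

End TensorProduct.

Lemma Pchi_tensor_prod (R : realType) (d L : nat) :
  @Pchi R d L = tensor_prod (fun=> cut02 (Pfactor L)).
Proof.
apply/funext => x; rewrite /Pchi /chi02 /Pfun /tensor_prod.
case: (boolP [forall j, 0 <= x ord0 j <= 2]) => [in02|/forallPn [i i_out]].
  by rewrite mulr1; apply: eq_bigr => i _; rewrite /cut02 (forallP in02 i).
by rewrite mulr0 (bigD1 i) //= /cut02 (negbTE i_out) mul0r.
Qed.

Lemma Pchi_Cm (R : realType) (d L : nat) : (1 <= L)%N -> Cm (2 * L - 1) (@Pchi R d L).
Proof.
move=> L_gt0; rewrite Pchi_tensor_prod; apply: Cm_tensor_prod => _.
by apply: (Cm1_cut02 (Pfactor_sin_divisible R L)); lia.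
Qed.

Section Window.
Variables (R : realType) (d : nat) (x : 'rV[R]_d).

(* The translates meeting the support of the cut-off tensor product at x are
   those with n_j + floor x_j in {0, 1, 2}. *)
Definition window (f : {ffun 'I_d -> 'I_3}) : 'rV[int]_d :=
  \row_j (- Num.floor (x ord0 j) + (f j : nat)%:Z).

Lemma window_inj : injective window.
Proof.
move=> f f' /rowP eq_ff'; apply/ffunP => i; move: (eq_ff' i); rewrite !mxE.
by move/addrI/eqP; rewrite eqz_nat => /eqP /ord_inj.
Qed.

Lemma tensor_prod_cut02_shift phi (n : 'rV[int]_d) :
  tensor_prod (fun=> cut02 phi) (x + map_mx intr n) =
  \prod_i cut02 phi (x ord0 i + (n ord0 i)%:~R).
Proof. by apply: eq_bigr => i _; rewrite !mxE. Qed.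

Lemma tensor_prod_cut02_out_window phi (n : 'rV[int]_d) : ~ range window n ->
  tensor_prod (fun=> cut02 phi) (x + map_mx intr n) = 0.
Proof.
move=> n_out; rewrite tensor_prod_cut02_shift.
case: (boolP [forall i, 0 <= x ord0 i + (n ord0 i)%:~R <= 2]) => [in02|]; last first.
  by move=> /forallPn [i i_out]; rewrite (bigD1 i) //= /cut02 (negbTE i_out) mul0r.
exfalso; apply: n_out.
exists [ffun i => inord (absz (n ord0 i + Num.floor (x ord0 i)))] => //.
apply/rowP => i; rewrite !mxE ffunE.
move/forallP: in02 => /(_ i) /andP [ge0 le2].
have floor_gt := floorD1_gt (x ord0 i); have floor_le := floor_le (x ord0 i).
have k_gt : (-1 < n ord0 i + Num.floor (x ord0 i))%R.
  by rewrite -(ltr_int R) intrD; rewrite intrD in floor_gt; lra.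
have k_le : (n ord0 i + Num.floor (x ord0 i) <= 2)%R.
  by rewrite -(ler_int R) intrD; lra.
rewrite inordK; last by lia.
by move: k_gt k_le; move: (Num.floor _) (n ord0 i) => F N; lia.
Qed.

Lemma sum_window_tensor_prod phi :
  \sum_f tensor_prod (fun=> cut02 phi) (x + map_mx intr (window f)) =
  \prod_i \sum_(k < 3) cut02 phi (x ord0 i - (Num.floor (x ord0 i))%:~R + (k : nat)%:R).
Proof.
rewrite (eq_bigr _ (fun f _ => tensor_prod_cut02_shift phi (window f))).
rewrite bigA_distr_bigA; apply: eq_bigr => f _; apply: eq_bigr => i _.
by rewrite /window mxE intrD intrN addrA.
Qed.

End Window.

Section PartitionOfUnity.
Variables (R : realType) (L : nat).
Hypothesis L_gt0 : (1 <= L)%N.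

Lemma sum3_cut02_Pfactor (y : R) : 0 <= y < 1 ->
  \sum_(k < 3) cut02 (Pfactor L) (y + (k : nat)%:R) = 1.
Proof.
move=> /andP [y_ge0 y_lt1]; rewrite !big_ord_recr big_ord0 /= add0r.
rewrite [X in _ + X](_ : _ = 0); last first.
  rewrite /cut02; case: ifP => // /andP [_ y2_le2].
  have -> : y = 0 by lra.
  by rewrite add0r (Pfactor_root R L_gt0).2.
rewrite addr0 addr0 /cut02 !ifT; first exact: Pfactor_addD1.
all: by apply/andP; split; lra.
Qed.

Lemma Pchi_partition_of_unity (d : nat) (x : 'rV[R]_d) :
  (\esum_(n in [set: 'rV[int]_d]) (@Pchi R d L (x + map_mx intr n))%:E)%E = 1%E.
Proof.
rewrite Pchi_tensor_prod.
set F := fun n => _.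
have -> : (\esum_(n in setT) F n = \esum_(n in range (window x)) F n)%E.
  rewrite [RHS]esum_mkcond; apply: eq_esum => n _; case: ifPn => // /negP n_out.
  by rewrite /F tensor_prod_cut02_out_window //; move: n_out; rewrite inE.
rewrite esum_image; last by move=> f f' _ _; exact: window_inj.
rewrite esum_fset; [|exact: finite_finset|]; last first.
  by move=> f _; rewrite lee_fin; apply: prodr_ge0 => i _; exact/cut02_ge0/Pfactor_ge0.
rewrite (fsbigE (enum {ffun 'I_d -> 'I_3})) ?enum_uniq //; last by move=> f; rewrite mem_enum.
rewrite sumEFin (eq_bigl xpredT) ?big_enum /=; last by move=> f; rewrite in_setT.
rewrite sum_window_tensor_prod big1 // => i _; apply: sum3_cut02_Pfactor.
have floor_gt := floorD1_gt (x ord0 i); have floor_le := floor_le (x ord0 i).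
by apply/andP; split; rewrite ?intrD in floor_gt; lra.
Qed.

End PartitionOfUnity.

Unset Implicit Arguments. Set Strict Implicit.

Theorem corollary3p4 (R : realType) (d L : nat) :
  (2 <= d)%N -> (1 <= L)%N ->
  (forall x : 'rV[R]_d,
     (\esum_(n in [set: 'rV[int]_d]) (Pchi L (x + map_mx intr n))%:E)%E
       = 1%E) /\
  Cm (2 * L - 1) (@Pchi R d L).
Proof.
move=> _ L_gt0; split.
- by move=> x; exact: Pchi_partition_of_unity.
- exact: Pchi_Cm.
Qed.
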